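(* Let $\theta\in\mathbb{R}\setminus2\pi\mathbb{Z}$, $a\in\mathbb{C}\setminus\{0\}$, and let $G\subset\mathcal{H}(1,\mathbb{C})$ be the group generated by $h:z\mapsto e^{i\theta}z$ and $f=(a,e^{i\theta}):z\mapsto e^{i\theta}(z-a)+a$. Then exactly one of the following holds: (i) every orbit of $G$ is dense in $\mathbb{C}$; this is the case if and only if $\theta\notin H_2\cup H_3$ (equivalently $f\notin\mathcal{SR}_1$); (ii) every orbit of $G$ is closed and discrete in $\mathbb{C}$; this is the case if and only if $\theta\in H_2\cup H_3$ (equivalently $f\in\mathcal{SR}_1$).
   Context: $\mathcal{H}(1,\mathbb{C})$ is the group of maps $z\mapsto\lambda z+b$ of $\mathbb{C}$, $\lambda\in\mathbb{C}^*$, $b\in\mathbb{C}$. $H_2=(\frac{\pi}{2}+\pi\mathbb{Z})\cup\pi\mathbb{Z}$, $F_2=\{e^{ix}:x\in H_2\}$, $H_3=(\frac{\pi}{3}+\pi\mathbb{Z})\cup(-\frac{\pi}{3}+\pi\mathbb{Z})\cup\pi\mathbb{Z}$, $F_3=\{e^{ix}:x\in H_3\}$, $\mathcal{SR}_1=\{z\mapsto\lambda z+b:\ \lambda\in F_2\cup F_3,\ b\in\mathbb{C}\}$. Orbits: $G(z)=\{g(z):g\in G\}$. *)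

From Stdlib Require Import Reals ZArith.
Open Scope R_scope.

(** Complex numbers as R * R (real part, imaginary part). *)
Definition Cplx : Type := (R * R)%type.
Definition C0 : Cplx := (0, 0).
Definition C1 : Cplx := (1, 0).
Definition Cadd (z w : Cplx) : Cplx := (fst z + fst w, snd z + snd w).
Definition Copp (z : Cplx) : Cplx := (- fst z, - snd z).
Definition Cmul (z w : Cplx) : Cplx :=
  (fst z * fst w - snd z * snd w, fst z * snd w + snd z * fst w).
Definition Cinv (z : Cplx) : Cplx :=
  let n := fst z * fst z + snd z * snd z in (fst z / n, - snd z / n).
Definition Cnorm (z : Cplx) : R := sqrt (fst z * fst z + snd z * snd z).
Definition Cdist (z w : Cplx) : R := Cnorm (Cadd z (Copp w)).
Definition Cexpi (x : R) : Cplx := (cos x, sin x).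

(** Elements of H(1,Cplx): pairs (lambda, b) with lambda <> 0, acting by z |-> lambda z + b. *)
Definition aff : Type := (Cplx * Cplx)%type.
Definition aff_apply (g : aff) (z : Cplx) : Cplx := Cadd (Cmul (fst g) z) (snd g).
Definition aff_id : aff := (C1, C0).
(** composition g o k : z |-> g (k z) *)
Definition aff_comp (g k : aff) : aff :=
  (Cmul (fst g) (fst k), Cadd (Cmul (fst g) (snd k)) (snd g)).
Definition aff_inv (g : aff) : aff :=
  (Cinv (fst g), Copp (Cmul (Cinv (fst g)) (snd g))).
Definition in_H1C (g : aff) : Prop := fst g <> C0.

Inductive gen_group (S : aff -> Prop) : aff -> Prop :=
| gg_id : gen_group S aff_id
| gg_gen : forall g, S g -> gen_group S g
| gg_inv : forall g, gen_group S g -> gen_group S (aff_inv g)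
| gg_comp : forall g k, gen_group S g -> gen_group S k -> gen_group S (aff_comp g k).

Definition Corbit (G : aff -> Prop) (z : Cplx) : Cplx -> Prop :=
  fun w => exists g, G g /\ w = aff_apply g z.

Definition Cdense (A : Cplx -> Prop) : Prop :=
  forall w eps, 0 < eps -> exists u, A u /\ Cdist u w < eps.
Definition Cclosed (A : Cplx -> Prop) : Prop :=
  forall w, (forall eps, 0 < eps -> exists u, A u /\ Cdist u w < eps) -> A w.
Definition Cdiscrete (A : Cplx -> Prop) : Prop :=
  forall w, A w -> exists eps, 0 < eps /\ forall u, A u -> Cdist u w < eps -> u = w.

Definition H2 (x : R) : Prop :=
  exists k : Z, x = PI / 2 + IZR k * PI \/ x = IZR k * PI.
Definition H3 (x : R) : Prop :=
  exists k : Z, x = PI / 3 + IZR k * PI \/ x = - (PI / 3) + IZR k * PI \/ x = IZR k * PI.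
Definition F2 (l : Cplx) : Prop := exists x, H2 x /\ l = Cexpi x.
Definition F3 (l : Cplx) : Prop := exists x, H3 x /\ l = Cexpi x.
Definition SR1 (g : aff) : Prop := F2 (fst g) \/ F3 (fst g).

(** h : z |-> e^{i theta} z ;  f = (a, e^{i theta}) : z |-> e^{i theta}(z - a) + a *)
Definition rot_h (theta : R) : aff := (Cexpi theta, C0).
Definition rot_f (a : Cplx) (theta : R) : aff :=
  (Cexpi theta, Cmul (Cadd C1 (Copp (Cexpi theta))) a).
Definition G_hf (a : Cplx) (theta : R) : aff -> Prop :=
  gen_group (fun g => g = rot_h theta \/ g = rot_f a theta).

(* The map f o h^-1 is the translation by b = (1 - e^{i theta}) a <> 0, and
   conjugating a translation by h rotates it, so the translation vectors in G form
   an additive subgroup T of C stable under multiplication by e^{+-i theta}, hence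
   by 2 cos theta.  Everything depends on whether 2 cos theta is an integer, which
   for theta not in 2 pi Z means exactly theta in H_2 u H_3.
   If it is not, its fractional part r in (0,1) also multiplies T, so T contains
   r^k b -> 0 together with e^{i theta} r^k b; the lattices they span are ever
   finer, so T, and with it every orbit z + T, is dense.
   If it is, e^{i theta} is a root of unity and the lattice spanned by b and
   e^{i theta} b (by b and i b when e^{i theta} = -1) is e^{i theta}-stable, so
   every element of G is z |-> e^{i j theta} z + l with l in that lattice: each
   orbit lies in finitely many translates of a lattice, hence is closed and
   discrete.  A dense set is never discrete, so exactly one case occurs. *)

From Pilot Require Import Defs.
From Stdlib Require Import Reals ZArith Lra Lia Psatz Nsatz Classical.
(* Re-import so that [C1] denotes [Defs.C1], not the [C1] of [Reals]. *)
Import Defs.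
Open Scope R_scope.

Lemma cos_eq_cos_inv t x : cos t = cos x ->
  exists k : Z, t = x + 2 * IZR k * PI \/ t = - x + 2 * IZR k * PI.
Proof.
  intro E.
  assert (Hprod : -2 * sin ((t - x) / 2) * sin ((t + x) / 2) = 0)
    by (rewrite <- form2; lra).
  assert (Hsin : sin ((t - x) / 2) = 0 \/ sin ((t + x) / 2) = 0).
  { apply Rmult_integral in Hprod as [H | H]; [|now right].
    apply Rmult_integral in H as [H | H]; [lra | now left]. }
  destruct Hsin as [H | H]; apply sin_eq_0_0 in H as [k Hk];
    exists k; [left | right]; lra.
Qed.

Lemma cos_int_PI k : cos (IZR k * PI) = 1 \/ cos (IZR k * PI) = -1.
Proof.
  assert (Hs : sin (IZR k * PI) = 0) by (apply sin_eq_0_1; eauto).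
  pose proof (sin2_cos2 (IZR k * PI)) as Hc. rewrite Hs in Hc. unfold Rsqr in Hc.
  nra.
Qed.

Lemma cos_plus_int_PI x k :
  cos (x + IZR k * PI) = cos x \/ cos (x + IZR k * PI) = - cos x.
Proof.
  rewrite cos_plus, (sin_eq_0_1 (IZR k * PI)) by eauto.
  destruct (cos_int_PI k) as [-> | ->]; [left | right]; ring.
Qed.

Lemma two_cos_int_of_H2_H3 x : H2 x \/ H3 x -> exists n : Z, 2 * cos x = IZR n.
Proof.
  assert (Hcase : forall y k, cos y = 0 \/ cos y = 1/2 \/ cos y = 1 ->
            exists n : Z, 2 * cos (y + IZR k * PI) = IZR n).
  { intros y k Hy. destruct (cos_plus_int_PI y k) as [-> | ->];
      destruct Hy as [-> | [-> | ->]];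
      solve [ exists 0%Z; simpl; lra | exists 1%Z; simpl; lra | exists (-1)%Z; simpl; lra
            | exists 2%Z; simpl; lra | exists (-2)%Z; simpl; lra ]. }
  assert (Hpi2 := cos_PI2). assert (Hpi3 := cos_PI3).
  assert (Hmpi3 : cos (- (PI / 3)) = 1/2) by (rewrite cos_neg; exact cos_PI3).
  intros [[k [-> | ->]] | [k [-> | [-> | ->]]]];
    first [ apply Hcase; lra
          | rewrite <- (Rplus_0_l (IZR k * PI)); apply Hcase; rewrite cos_0; lra ].
Qed.

Lemma H2_H3_of_two_cos_int t : (forall k : Z, t <> 2 * PI * IZR k) ->
  forall n : Z, 2 * cos t = IZR n -> H2 t \/ H3 t.
Proof.
  intros ht n Hn. pose proof (COS_bound t) as [B1 B2].
  assert (Hrange : (-2 <= n <= 2)%Z) by (split; apply le_IZR; simpl; lra).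
  assert (Hn' : n = (-2)%Z \/ n = (-1)%Z \/ n = 0%Z \/ n = 1%Z \/ n = 2%Z) by lia.
  destruct Hn' as [-> | [-> | [-> | [-> | ->]]]]; simpl in Hn.
  - assert (E : cos t = cos PI) by (rewrite cos_PI; lra).
    left; destruct (cos_eq_cos_inv _ _ E) as [k [E' | E']].
    + exists (2 * k + 1)%Z; right. rewrite plus_IZR, mult_IZR. simpl. lra.
    + exists (2 * k - 1)%Z; right. rewrite minus_IZR, mult_IZR. simpl. lra.
  - assert (E : cos t = cos (2 * (PI / 3))) by (rewrite cos_2PI3; lra).
    right; destruct (cos_eq_cos_inv _ _ E) as [k [E' | E']].
    + exists (2 * k + 1)%Z; right; left. rewrite plus_IZR, mult_IZR. simpl. lra.
    + exists (2 * k - 1)%Z; left. rewrite minus_IZR, mult_IZR. simpl. lra.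
  - assert (E : cos t = 0) by lra.
    left; destruct (cos_eq_0_0 _ E) as [k E']. exists k; left; lra.
  - assert (E : cos t = cos (PI / 3)) by (rewrite cos_PI3; lra).
    right; destruct (cos_eq_cos_inv _ _ E) as [k [E' | E']].
    + exists (2 * k)%Z; left. rewrite mult_IZR. simpl. lra.
    + exists (2 * k)%Z; right; left. rewrite mult_IZR. simpl. lra.
  - assert (E : cos t = cos 0) by (rewrite cos_0; lra).
    exfalso; destruct (cos_eq_cos_inv _ _ E) as [k [E' | E']]; apply (ht k); lra.
Qed.
Definition Cscal (r : R) (z : Cplx) : Cplx := (r * fst z, r * snd z).
Definition Cnorm2 (z : Cplx) : R := fst z * fst z + snd z * snd z.

Ltac Cext := apply injective_projections; cbn [fst snd].
Ltac Cring := unfold Cadd, Copp, Cmul, Cscal, C0, C1; Cext; ring.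

Lemma cos_sin_sq t : cos t * cos t + sin t * sin t = 1.
Proof. pose proof (sin2_cos2 t) as H. unfold Rsqr in H. lra. Qed.

Lemma Cnorm2_ge0 z : 0 <= Cnorm2 z.
Proof. unfold Cnorm2. nra. Qed.

Lemma Cnorm2_pos z : z <> C0 -> 0 < Cnorm2 z.
Proof.
  destruct z as [x y]; unfold Cnorm2; cbn [fst snd]; intro Hz.
  destruct (Req_dec x 0), (Req_dec y 0); subst; try nra. now contradict Hz.
Qed.

Lemma Cnorm2_mul z w : Cnorm2 (Cmul z w) = Cnorm2 z * Cnorm2 w.
Proof. unfold Cnorm2, Cmul; cbn [fst snd]. ring. Qed.

Lemma Cmul_neq0 z w : z <> C0 -> w <> C0 -> Cmul z w <> C0.
Proof.
  intros Hz Hw E. pose proof (Cnorm2_pos z Hz). pose proof (Cnorm2_pos w Hw).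
  apply (f_equal Cnorm2) in E. rewrite Cnorm2_mul in E.
  replace (Cnorm2 C0) with 0 in E by (unfold Cnorm2, C0; simpl; ring). nra.
Qed.

Lemma Cnorm_lt_iff z e : 0 < e -> (Cnorm z < e <-> Cnorm2 z < e * e).
Proof.
  intro He. unfold Cnorm. fold (Cnorm2 z). pose proof (Cnorm2_ge0 z).
  rewrite <- (sqrt_square e) at 1 by lra. split.
  - intro Hlt. apply sqrt_lt_0_alt in Hlt. exact Hlt.
  - intro Hlt. apply sqrt_lt_1_alt. lra.
Qed.

Lemma Cinv_Cexpi t : Cinv (Cexpi t) = (cos t, - sin t).
Proof. unfold Cinv, Cexpi; cbn [fst snd]; cbv zeta. rewrite cos_sin_sq. Cext; field. Qed.

Lemma Cexpi_neq0 t : Cexpi t <> C0.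
Proof.
  intro E. pose proof (cos_sin_sq t). unfold Cexpi, C0 in E.
  injection E as E1 E2. rewrite E1, E2 in *. lra.
Qed.

Lemma Cexpi_inv_neq0 t : Cinv (Cexpi t) <> C0.
Proof.
  rewrite Cinv_Cexpi. intro E. pose proof (cos_sin_sq t). unfold C0 in E.
  injection E as E1 E2. nra.
Qed.

Lemma one_sub_Cexpi_neq0 t : cos t <> 1 -> Cadd C1 (Copp (Cexpi t)) <> C0.
Proof. intros Hc E. apply (f_equal fst) in E. unfold Cadd, Copp, Cexpi, C1, C0 in E; simpl in E. lra. Qed.

Lemma Cnorm2_rotated_comb t A B z :
  Cnorm2 (Cadd (Cscal A z) (Cscal B (Cmul (Cexpi t) z)))
  = (A * A + 2 * A * B * cos t + B * B) * Cnorm2 z.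
Proof.
  pose proof (cos_sin_sq t) as Hcs.
  transitivity ((A * A + 2 * A * B * cos t + B * B * (cos t * cos t + sin t * sin t))
                 * Cnorm2 z).
  - unfold Cnorm2, Cadd, Cscal, Cmul, Cexpi; cbn [fst snd]. ring.
  - rewrite Hcs. ring.
Qed.

(* The grid Z z + Z e^{it} z is a lattice whose fundamental parallelogram has
   diameter at most 2|z|. *)
Lemma rotated_lattice_covering t z d : sin t <> 0 -> z <> C0 ->
  exists m n : Z,
    Cnorm2 (Cadd (Cadd (Cscal (IZR m) z) (Cscal (IZR n) (Cmul (Cexpi t) z))) (Copp d))
    < 4 * Cnorm2 z.
Proof.
  intros Hsin Hz. pose proof (Cnorm2_pos z Hz) as Hz2.
  assert (Hdet : sin t * Cnorm2 z <> 0) by (apply Rmult_integral_contrapositive; lra).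
  set (x := (fst d * (cos t * snd z + sin t * fst z) - snd d * (cos t * fst z - sin t * snd z))
            / (sin t * Cnorm2 z)).
  set (y := (fst z * snd d - snd z * fst d) / (sin t * Cnorm2 z)).
  assert (Hd : d = Cadd (Cscal x z) (Cscal y (Cmul (Cexpi t) z))).
  { unfold x, y, Cnorm2 in *; unfold Cadd, Cscal, Cmul, Cexpi; Cext; field; lra. }
  exists (Int_part x), (Int_part y).
  set (A := IZR (Int_part x) - x). set (B := IZR (Int_part y) - y).
  replace (Cadd _ (Copp d)) with (Cadd (Cscal A z) (Cscal B (Cmul (Cexpi t) z)))
    by (rewrite Hd; unfold A, B; Cring).
  rewrite Cnorm2_rotated_comb. apply Rmult_lt_compat_r; [exact Hz2|].
  pose proof (base_Int_part x). pose proof (base_Int_part y). pose proof (COS_bound t).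
  assert (HA : -1 < A <= 0) by (unfold A; lra). assert (HB : -1 < B <= 0) by (unfold B; lra).
  assert (HAB0 : 0 <= A * B) by nra.
  assert (HAB : A * B * cos t <= A * B) by nra.
  nra.
Qed.

Section RotationInvariantSubgroup.

Variable theta : R.
Hypothesis two_cos_not_int : forall n : Z, 2 * cos theta <> IZR n.
Variable T : Cplx -> Prop.
Hypothesis T_add : forall v w, T v -> T w -> T (Cadd v w).
Hypothesis T_opp : forall v, T v -> T (Copp v).
Hypothesis T_rot : forall v, T v -> T (Cmul (Cexpi theta) v).
Hypothesis T_rot_inv : forall v, T v -> T (Cmul (Cinv (Cexpi theta)) v).
Variable c : Cplx.
Hypothesis T_c : T c.
Hypothesis c_neq0 : c <> C0.

Lemma T_scal_two_cos v : T v -> T (Cscal (2 * cos theta) v).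
Proof.
  intro Hv.
  replace (Cscal (2 * cos theta) v)
    with (Cadd (Cmul (Cexpi theta) v) (Cmul (Cinv (Cexpi theta)) v)) by
    (rewrite Cinv_Cexpi; unfold Cexpi; Cring).
  auto.
Qed.

Lemma T_scal_nat (n : nat) v : T v -> T (Cscal (INR n) v).
Proof.
  intro Hv. induction n as [|n IH].
  - replace (Cscal (INR 0) v) with (Cadd c (Copp c)) by (simpl; Cring). auto.
  - replace (Cscal (INR (S n)) v) with (Cadd (Cscal (INR n) v) v)
      by (rewrite S_INR; Cring). auto.
Qed.

Lemma T_scal_int (m : Z) v : T v -> T (Cscal (IZR m) v).
Proof.
  intro Hv. destruct (Z_le_gt_dec 0 m).
  - rewrite <- (Z2Nat.id m), <- INR_IZR_INZ by lia. now apply T_scal_nat.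
  - replace (Cscal (IZR m) v) with (Copp (Cscal (INR (Z.to_nat (- m))) v)).
    + now apply T_opp, T_scal_nat.
    + rewrite INR_IZR_INZ, Z2Nat.id, opp_IZR by lia. Cring.
Qed.

(* The fractional part r of 2 cos theta is a multiplier of T, and r^k c -> 0. *)
Lemma T_small_multiple y : 0 < y -> exists q, 0 < q < y /\ T (Cscal q c).
Proof.
  intro Hy.
  set (r := 2 * cos theta - IZR (Int_part (2 * cos theta))).
  assert (Hr : 0 < r < 1).
  { pose proof (base_Int_part (2 * cos theta)).
    pose proof (two_cos_not_int (Int_part (2 * cos theta))). unfold r; lra. }
  assert (Hpow : forall k, T (Cscal (r ^ k) c)).
  { induction k as [|k IH].
    - replace (Cscal (r ^ 0) c) with c by Cring. exact T_c.
    - replace (Cscal (r ^ S k) c) with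
        (Cadd (Cscal (2 * cos theta) (Cscal (r ^ k) c))
              (Copp (Cscal (IZR (Int_part (2 * cos theta))) (Cscal (r ^ k) c))))
        by (cbn [pow]; unfold r; Cring).
      apply T_add; [apply T_scal_two_cos | apply T_opp, T_scal_int]; exact IH. }
  assert (Hr1 : Rabs r < 1) by (rewrite Rabs_pos_eq; lra).
  destruct (pow_lt_1_zero r Hr1 y Hy) as [N HN].
  specialize (HN N (le_n N)). rewrite Rabs_pos_eq in HN by (apply pow_le; lra).
  exists (r ^ N). split; [split; [apply pow_lt; lra | exact HN] | apply Hpow].
Qed.

Lemma rotation_invariant_subgroup_dense : Cdense T.
Proof.
  intros w eps Heps.
  assert (Hsin : sin theta <> 0).
  { intro E. pose proof (cos_sin_sq theta) as Hcs. rewrite E in Hcs.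
    assert (Hc : cos theta = 1 \/ cos theta = -1) by nra.
    destruct Hc as [Hc | Hc]; [apply (two_cos_not_int 2) | apply (two_cos_not_int (-2))];
      simpl; lra. }
  pose proof (Cnorm2_pos c c_neq0) as Hc2.
  set (bound := eps * eps / (4 * Cnorm2 c)).
  assert (Hbound : 0 < bound) by (apply Rdiv_lt_0_compat; nra).
  destruct (T_small_multiple (Rmin 1 bound)) as [q [[Hq0 Hqy] Hq]].
  { now apply Rmin_glb_lt; [lra|]. }
  assert (Hqq : 4 * (q * q * Cnorm2 c) < eps * eps).
  { pose proof (Rmin_l 1 bound). pose proof (Rmin_r 1 bound).
    assert (Hq2 : q * q < bound) by nra.
    apply (Rmult_lt_compat_l (4 * Cnorm2 c)) in Hq2; [|lra].
    unfold bound in Hq2. replace (4 * Cnorm2 c * (eps * eps / (4 * Cnorm2 c))) with (eps * eps) in Hq2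
      by (field; lra).
    lra. }
  assert (Hqc : Cscal q c <> C0).
  { intro E. apply c_neq0. replace c with (Cscal (/ q) (Cscal q c)).
    - rewrite E. Cring.
    - unfold Cscal; Cext; field; lra. }
  destruct (rotated_lattice_covering theta (Cscal q c) w Hsin Hqc) as [m [n Hmn]].
  exists (Cadd (Cscal (IZR m) (Cscal q c)) (Cscal (IZR n) (Cmul (Cexpi theta) (Cscal q c)))).
  split.
  - apply T_add; apply T_scal_int; [| apply T_rot]; exact Hq.
  - apply Cnorm_lt_iff; [exact Heps|].
    replace (Cnorm2 (Cscal q c)) with (q * q * Cnorm2 c) in Hmn by (unfold Cnorm2, Cscal; simpl; ring).
    unfold Cdist. lra.
Qed.

End RotationInvariantSubgroup.

Lemma aff_comp_translation v w : aff_comp (C1, v) (C1, w) = (C1, Cadd v w).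
Proof. unfold aff_comp; cbn [fst snd]. f_equal; Cring. Qed.

Lemma aff_inv_translation v : aff_inv (C1, v) = (C1, Copp v).
Proof. unfold aff_inv, Cinv, Cmul, Copp, C1; cbn [fst snd]. f_equal; Cext; field. Qed.

Lemma aff_conj_translation g v : fst g <> C0 ->
  aff_comp g (aff_comp (C1, v) (aff_inv g)) = (C1, Cmul (fst g) v).
Proof.
  destruct g as [[x y] b]; cbn [fst]; intro Hg.
  assert (Hn : x * x + y * y <> 0) by (pose proof (Cnorm2_pos (x, y) Hg); unfold Cnorm2 in *; simpl in *; lra).
  unfold aff_comp, aff_inv, Cinv, Cmul, Cadd, Copp, C1; cbn [fst snd].
  f_equal; Cext; field; exact Hn.
Qed.

Section GeneratedGroup.

Variables (theta : R) (a : Cplx).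

Let G := G_hf a theta.
Let lam := Cexpi theta.

Lemma G_hf_h : G (rot_h theta).
Proof. apply gg_gen. now left. Qed.

Lemma G_hf_f : G (rot_f a theta).
Proof. apply gg_gen. now right. Qed.

Lemma G_hf_translation_add v w : G (C1, v) -> G (C1, w) -> G (C1, Cadd v w).
Proof. intros Hv Hw. rewrite <- aff_comp_translation. now apply gg_comp. Qed.

Lemma G_hf_translation_opp v : G (C1, v) -> G (C1, Copp v).
Proof. intro Hv. rewrite <- aff_inv_translation. now apply gg_inv. Qed.

Lemma G_hf_translation_rot v : G (C1, v) -> G (C1, Cmul lam v).
Proof.
  intro Hv. rewrite <- (aff_conj_translation (rot_h theta)) by apply Cexpi_neq0.
  apply gg_comp; [apply G_hf_h | apply gg_comp; [exact Hv | apply gg_inv, G_hf_h]].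
Qed.

Lemma G_hf_translation_rot_inv v : G (C1, v) -> G (C1, Cmul (Cinv lam) v).
Proof.
  intro Hv.
  replace (Cinv lam) with (fst (aff_inv (rot_h theta))) by reflexivity.
  rewrite <- aff_conj_translation by apply Cexpi_inv_neq0.
  apply gg_comp; [apply gg_inv, G_hf_h | apply gg_comp; [exact Hv | apply gg_inv, gg_inv, G_hf_h]].
Qed.

Lemma G_hf_translation_f : G (C1, Cmul (Cadd C1 (Copp lam)) a).
Proof.
  replace (C1, Cmul (Cadd C1 (Copp lam)) a) with (aff_comp (rot_f a theta) (aff_inv (rot_h theta))).
  - apply gg_comp; [apply G_hf_f | apply gg_inv, G_hf_h].
  - unfold aff_comp, aff_inv, rot_f, rot_h, lam; cbn [fst snd].
    rewrite Cinv_Cexpi. pose proof (cos_sin_sq theta).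
    unfold Cexpi, Cmul, Cadd, Copp, C1, C0; cbn [fst snd].
    f_equal; Cext; nra.
Qed.

Lemma G_hf_orbit_translate z v : G (C1, v) -> Corbit G z (Cadd z v).
Proof.
  intro Hv. exists (C1, v). split; [exact Hv|].
  unfold aff_apply, Cmul, Cadd, C1; cbn [fst snd]. Cext; ring.
Qed.

Lemma G_hf_orbits_dense : (forall n : Z, 2 * cos theta <> IZR n) -> a <> C0 ->
  forall z, Cdense (Corbit G z).
Proof.
  intros Hn Ha z w eps Heps.
  assert (Hcos : cos theta <> 1) by (intro E; apply (Hn 2%Z); simpl; lra).
  destruct (rotation_invariant_subgroup_dense theta Hn (fun v => G (C1, v))
              G_hf_translation_add G_hf_translation_opp G_hf_translation_rot
              G_hf_translation_rot_inv _ G_hf_translation_f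
              (Cmul_neq0 _ _ (one_sub_Cexpi_neq0 theta Hcos) Ha)
              (Cadd w (Copp z)) eps Heps) as [v [Hv Hd]].
  exists (Cadd z v). split; [now apply G_hf_orbit_translate|].
  replace (Cdist (Cadd z v) w) with (Cdist v (Cadd w (Copp z))); [exact Hd|].
  unfold Cdist. f_equal. Cring.
Qed.

End GeneratedGroup.

Definition Cno_accumulation (S : Cplx -> Prop) : Prop :=
  forall p, exists eps, 0 < eps /\ forall u, S u -> Cdist u p < eps -> u = p.

Lemma no_accumulation_closed_discrete S :
  Cno_accumulation S -> Cclosed S /\ Cdiscrete S.
Proof.
  intro HS. split.
  - intros w Hw. destruct (HS w) as [e [He Hu]]. destruct (Hw e He) as [u [Su Hd]].
    rewrite <- (Hu u Su Hd). exact Su.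
  - intros w _. destruct (HS w) as [e [He Hu]]. exists e; auto.
Qed.

Lemma no_accumulation_incl (S A : Cplx -> Prop) :
  (forall u, A u -> S u) -> Cno_accumulation S -> Cno_accumulation A.
Proof. intros HAS HS p. destruct (HS p) as [e [He Hu]]. exists e; auto. Qed.

Lemma no_accumulation_union A B :
  Cno_accumulation A -> Cno_accumulation B -> Cno_accumulation (fun u => A u \/ B u).
Proof.
  intros HA HB p. destruct (HA p) as [e1 [He1 H1]], (HB p) as [e2 [He2 H2]].
  exists (Rmin e1 e2). split; [now apply Rmin_glb_lt|].
  pose proof (Rmin_l e1 e2). pose proof (Rmin_r e1 e2).
  intros u [Au | Bu] Hd; [apply H1 | apply H2]; auto; lra.
Qed.

Lemma no_accumulation_finite_union (S : nat -> Cplx -> Prop) (N : nat) :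
  (forall j, Cno_accumulation (S j)) ->
  Cno_accumulation (fun u => exists j, (j < N)%nat /\ S j u).
Proof.
  intro HS. induction N as [|N IH].
  - intro p. exists 1. split; [lra|]. intros u [j [Hj _]]. lia.
  - eapply no_accumulation_incl; [|exact (no_accumulation_union _ _ IH (HS N))].
    intros u [j [Hj Hu]]. destruct (Nat.eq_dec j N) as [-> | Hne].
    + now right.
    + left. exists j. split; [lia | exact Hu].
Qed.

Lemma int_isolated r : exists e, 0 < e /\ forall m : Z, Rabs (IZR m - r) < e -> IZR m = r.
Proof.
  destruct (base_Int_part r) as [H1 H2]. set (m0 := Int_part r) in *.
  destruct (Req_dec (IZR m0) r) as [E | E].
  - exists 1. split; [lra|]. intros m Hm. rewrite <- E in Hm |- *.
    apply Rabs_def2 in Hm as [Hm1 Hm2]. rewrite <- minus_IZR in Hm1, Hm2.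
    assert (A1 : IZR (-1) < IZR (m - m0)) by (simpl; lra).
    assert (A2 : IZR (m - m0) < IZR 1) by (simpl; lra).
    apply lt_IZR in A1. apply lt_IZR in A2. f_equal. lia.
  - exists (Rmin (r - IZR m0) (IZR m0 + 1 - r)). split; [apply Rmin_glb_lt; lra|].
    intros m Hm. exfalso. apply Rabs_def2 in Hm as [Hm1 Hm2].
    pose proof (Rmin_l (r - IZR m0) (IZR m0 + 1 - r)).
    pose proof (Rmin_r (r - IZR m0) (IZR m0 + 1 - r)).
    assert (A1 : IZR m0 < IZR m) by lra. assert (A2 : IZR m < IZR (m0 + 1)) by (rewrite plus_IZR; lra).
    apply lt_IZR in A1. apply lt_IZR in A2. lia.
Qed.

Definition Cdet (z w : Cplx) : R := fst z * snd w - snd z * fst w.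

Lemma Rabs_fst_le_Cnorm z : Rabs (fst z) <= Cnorm z.
Proof.
  unfold Cnorm. rewrite <- sqrt_Rsqr_abs. apply sqrt_le_1_alt. unfold Rsqr. nra.
Qed.

Lemma Rabs_snd_le_Cnorm z : Rabs (snd z) <= Cnorm z.
Proof.
  unfold Cnorm. rewrite <- sqrt_Rsqr_abs. apply sqrt_le_1_alt. unfold Rsqr. nra.
Qed.

Lemma Rabs_Cdet_le z w : Rabs (Cdet z w) <= (Rabs (fst w) + Rabs (snd w)) * Cnorm z.
Proof.
  unfold Cdet, Rminus. eapply Rle_trans; [apply Rabs_triang|].
  rewrite Rabs_Ropp, !Rabs_mult.
  pose proof (Rabs_fst_le_Cnorm z). pose proof (Rabs_snd_le_Cnorm z).
  pose proof (Rabs_pos (fst w)). pose proof (Rabs_pos (snd w)).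
  pose proof (Rabs_pos (fst z)). pose proof (Rabs_pos (snd z)).
  nra.
Qed.

Definition Clattice (e1 e2 : Cplx) (x : Cplx) : Prop :=
  exists m n : Z, x = Cadd (Cscal (IZR m) e1) (Cscal (IZR n) e2).

Lemma Rabs_Cdet_div_lt x e D K eps : D <> 0 ->
  Rabs (fst e) + Rabs (snd e) <= K -> Cnorm x * (K + 1) < eps * Rabs D ->
  Rabs (Cdet x e / D) < eps.
Proof.
  intros HD He Hx. assert (HDp : 0 < Rabs D) by now apply Rabs_pos_lt.
  pose proof (Rabs_Cdet_le x e) as Hle. pose proof (sqrt_pos (Cnorm2 x)) as Hx0.
  fold (Cnorm x) in Hx0.
  assert (Hlt : Rabs (Cdet x e) < eps * Rabs D).
  { apply Rle_lt_trans with ((K + 1) * Cnorm x); [|lra].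
    eapply Rle_trans; [exact Hle|]. apply Rmult_le_compat_r; [exact Hx0 | lra]. }
  unfold Rdiv. rewrite Rabs_mult, Rabs_inv.
  apply (Rmult_lt_compat_r (/ Rabs D)) in Hlt; [|now apply Rinv_0_lt_compat].
  rewrite Rmult_assoc, Rinv_r, Rmult_1_r in Hlt by lra. exact Hlt.
Qed.

(* The Cramer coordinates of a point are Lipschitz and take integer values on
   the coset, so near any point p only the coordinates of p itself can occur. *)
Lemma lattice_coset_no_accumulation v e1 e2 :
  Cdet e1 e2 <> 0 -> Cno_accumulation (fun u => exists x, Clattice e1 e2 x /\ u = Cadd v x).
Proof.
  intros HD p. set (D := Cdet e1 e2) in *.
  set (al := Cdet (Cadd p (Copp v)) e2 / D).
  set (be := - Cdet (Cadd p (Copp v)) e1 / D).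
  destruct (int_isolated al) as [ea [Hea Ha]], (int_isolated be) as [eb [Heb Hb]].
  pose proof (Rabs_pos_lt D HD) as HDp.
  pose proof (Rabs_pos (fst e1)). pose proof (Rabs_pos (snd e1)).
  pose proof (Rabs_pos (fst e2)). pose proof (Rabs_pos (snd e2)).
  set (K := Rabs (fst e1) + Rabs (snd e1) + Rabs (fst e2) + Rabs (snd e2)).
  assert (HK : 0 <= K) by (unfold K; lra).
  exists (Rmin ea eb * Rabs D / (K + 1)).
  split; [apply Rdiv_lt_0_compat; [apply Rmult_lt_0_compat; [now apply Rmin_glb_lt|]|]; lra|].
  intros u [x [[m [n ->]] Hu]] Hd.
  assert (Hdist : Cdist u p * (K + 1) < Rmin ea eb * Rabs D).
  { apply (Rmult_lt_compat_r (K + 1)) in Hd; [|lra].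
    unfold Rdiv in Hd. rewrite Rmult_assoc, Rinv_l, Rmult_1_r in Hd by lra. exact Hd. }
  assert (Hclose : forall eps, Rmin ea eb <= eps -> Cnorm (Cadd u (Copp p)) * (K + 1) < eps * Rabs D).
  { intros eps Heps. eapply Rlt_le_trans; [exact Hdist|]. apply Rmult_le_compat_r; lra. }
  assert (Hm : IZR m = al).
  { apply Ha. replace (IZR m - al) with (Cdet (Cadd u (Copp p)) e2 / D).
    - apply (Rabs_Cdet_div_lt _ _ _ K); [exact HD | unfold K; lra | apply Hclose, Rmin_l].
    - rewrite Hu. unfold al, D, Cdet, Cadd, Copp, Cscal; cbn [fst snd]. field. exact HD. }
  assert (Hn : IZR n = be).
  { apply Hb. replace (IZR n - be) with (- (Cdet (Cadd u (Copp p)) e1 / D)).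
    - rewrite Rabs_Ropp.
      apply (Rabs_Cdet_div_lt _ _ _ K); [exact HD | unfold K; lra | apply Hclose, Rmin_r].
    - rewrite Hu. unfold be, D, Cdet, Cadd, Copp, Cscal; cbn [fst snd]. field. exact HD. }
  rewrite Hu, Hm, Hn. unfold al, be, D, Cdet in *.
  unfold Cadd, Copp, Cscal; Cext; field; exact HD.
Qed.

Fixpoint Cpow (z : Cplx) (n : nat) : Cplx :=
  match n with O => C1 | S k => Cmul z (Cpow z k) end.

Lemma Cmul_assoc x y z : Cmul x (Cmul y z) = Cmul (Cmul x y) z.
Proof. Cring. Qed.

Lemma Cmul_1_l z : Cmul C1 z = z.
Proof. Cring. Qed.

Lemma Cpow_add z j k : Cpow z (j + k) = Cmul (Cpow z j) (Cpow z k).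
Proof.
  induction j as [|j IH]; cbn [Cpow Nat.add].
  - now rewrite Cmul_1_l.
  - now rewrite IH, Cmul_assoc.
Qed.

Lemma Cpow_mod z N j : Cpow z N = C1 -> Cpow z j = Cpow z (j mod N).
Proof.
  intro HN. assert (HNq : forall q, Cpow z (N * q) = C1).
  { induction q as [|q IH]; [now rewrite Nat.mul_0_r|].
    rewrite Nat.mul_succ_r, Cpow_add, IH, HN. Cring. }
  rewrite (Nat.div_mod_eq j N) at 1. now rewrite Cpow_add, HNq, Cmul_1_l.
Qed.

Lemma Cinv_eq z w : Cmul z w = C1 -> Cinv z = w.
Proof.
  destruct z as [x y], w as [u v]. unfold Cmul, C1, Cinv; cbn [fst snd]. intro E.
  injection E as E1 E2.
  assert (Hn : x * x + y * y <> 0).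
  { intro Hn. assert (x = 0) by nra. assert (y = 0) by nra. subst. lra. }
  assert (Hu : x = u * (x * x + y * y)) by nsatz.
  assert (Hv : - y = v * (x * x + y * y)) by nsatz.
  Cext; [rewrite Hu at 1 | rewrite Hv]; field; exact Hn.
Qed.

Lemma Cinv_Cpow z N j : (0 < N)%nat -> Cpow z N = C1 -> Cinv (Cpow z j) = Cpow z (j * (N - 1)).
Proof.
  intros HN Hz. apply Cinv_eq. rewrite <- Cpow_add, (Cpow_mod z N) by exact Hz.
  replace ((j + j * (N - 1)) mod N)%nat with 0%nat; [reflexivity|].
  replace (j + j * (N - 1))%nat with (j * N)%nat by nia.
  symmetry. now apply Nat.Div0.mod_mul.
Qed.

Lemma Cexpi_root_of_unity t (n : Z) : 2 * cos t = IZR n -> cos t <> 1 ->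
  exists N, (0 < N)%nat /\ Cpow (Cexpi t) N = C1.
Proof.
  intros Hn Hc1. pose proof (COS_bound t) as [B1 B2]. pose proof (cos_sin_sq t) as Hcs.
  assert (Hrange : (-2 <= n <= 2)%Z) by (split; apply le_IZR; simpl; lra).
  assert (Hn2 : n <> 2%Z) by (intros ->; simpl in Hn; lra).
  assert (Hn' : n = (-2)%Z \/ n = (-1)%Z \/ n = 0%Z \/ n = 1%Z) by lia.
  destruct Hn' as [-> | [-> | [-> | ->]]]; simpl in Hn; clear -Hn Hcs;
    [exists 2%nat | exists 3%nat | exists 4%nat | exists 6%nat];
    (split; [lia|]); unfold Cexpi; cbn [Cpow]; unfold Cmul, C1; cbn [fst snd];
    Cext; nsatz.
Qed.

Section InvariantLattice.

Variables (theta : R) (a : Cplx) (N : nat) (e1 e2 : Cplx).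

Let G := G_hf a theta.
Let lam := Cexpi theta.
Let L := Clattice e1 e2.

Hypothesis N_pos : (0 < N)%nat.
Hypothesis lam_root : Cpow lam N = C1.
Hypothesis L_lam_e1 : L (Cmul lam e1).
Hypothesis L_lam_e2 : L (Cmul lam e2).
Hypothesis L_f : L (Cmul (Cadd C1 (Copp lam)) a).
Hypothesis e1_e2_independent : Cdet e1 e2 <> 0.

Lemma lattice_0 : L C0.
Proof. exists 0%Z, 0%Z. Cring. Qed.

Lemma lattice_add x y : L x -> L y -> L (Cadd x y).
Proof.
  intros [m [n ->]] [m' [n' ->]]. exists (m + m')%Z, (n + n')%Z.
  rewrite !plus_IZR. Cring.
Qed.

Lemma lattice_opp x : L x -> L (Copp x).
Proof. intros [m [n ->]]. exists (- m)%Z, (- n)%Z. rewrite !opp_IZR. Cring. Qed.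

Lemma lattice_scal_int k x : L x -> L (Cscal (IZR k) x).
Proof. intros [m [n ->]]. exists (k * m)%Z, (k * n)%Z. rewrite !mult_IZR. Cring. Qed.

Lemma lattice_rot x : L x -> L (Cmul lam x).
Proof.
  intros [m [n ->]].
  replace (Cmul lam (Cadd (Cscal (IZR m) e1) (Cscal (IZR n) e2)))
    with (Cadd (Cscal (IZR m) (Cmul lam e1)) (Cscal (IZR n) (Cmul lam e2))) by Cring.
  apply lattice_add; apply lattice_scal_int; assumption.
Qed.

Lemma lattice_rot_pow j x : L x -> L (Cmul (Cpow lam j) x).
Proof.
  intro Hx. induction j as [|j IH]; cbn [Cpow].
  - now rewrite Cmul_1_l.
  - rewrite <- Cmul_assoc. now apply lattice_rot.
Qed.

Lemma G_hf_in_lattice_group g : G g -> exists j, fst g = Cpow lam j /\ L (snd g).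
Proof.
  induction 1 as [| g [-> | ->] | g _ [j [Hj Hl]] | g k _ [j [Hj Hl]] _ [j' [Hj' Hl']]].
  - exists 0%nat. split; [reflexivity | apply lattice_0].
  - exists 1%nat. split; [unfold rot_h, lam; simpl; Cring | apply lattice_0].
  - exists 1%nat. split; [unfold rot_f, lam; simpl; Cring | exact L_f].
  - exists (j * (N - 1))%nat. unfold aff_inv; cbn [fst snd].
    rewrite Hj, (Cinv_Cpow lam N j) by assumption.
    split; [reflexivity | apply lattice_opp, lattice_rot_pow, Hl].
  - exists (j + j')%nat. unfold aff_comp; cbn [fst snd].
    rewrite Hj, Hj', Cpow_add.
    split; [reflexivity | apply lattice_add; [apply lattice_rot_pow |]; assumption].
Qed.

Lemma G_hf_orbits_no_accumulation z : Cno_accumulation (Corbit G z).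
Proof.
  eapply no_accumulation_incl;
    [| apply (no_accumulation_finite_union
                (fun j u => exists x, L x /\ u = Cadd (Cmul (Cpow lam j) z) x) N);
       intro j; now apply lattice_coset_no_accumulation].
  intros u [g [Hg ->]]. destruct (G_hf_in_lattice_group g Hg) as [j [Hj Hl]].
  exists (j mod N)%nat. split; [apply Nat.mod_upper_bound; lia|].
  exists (snd g). split; [exact Hl|].
  unfold aff_apply. now rewrite Hj, <- (Cpow_mod lam N j lam_root).
Qed.

End InvariantLattice.

Lemma Cexpi_sq_mul t z :
  Cmul (Cexpi t) (Cmul (Cexpi t) z) = Cadd (Cscal (2 * cos t) (Cmul (Cexpi t) z)) (Copp z).
Proof.
  pose proof (cos_sin_sq t).
  unfold Cexpi, Cmul, Cadd, Cscal, Copp; Cext; nsatz.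
Qed.

Lemma G_hf_orbits_closed_discrete theta a (n : Z) :
  (forall k : Z, theta <> 2 * PI * IZR k) -> a <> C0 -> 2 * cos theta = IZR n ->
  forall z, Cclosed (Corbit (G_hf a theta) z) /\ Cdiscrete (Corbit (G_hf a theta) z).
Proof.
  intros Htheta Ha Hn z. apply no_accumulation_closed_discrete.
  assert (Hc1 : cos theta <> 1).
  { intro E. rewrite <- cos_0 in E.
    destruct (cos_eq_cos_inv _ _ E) as [k [Ek | Ek]]; apply (Htheta k); lra. }
  destruct (Cexpi_root_of_unity theta n Hn Hc1) as [N [HN Hroot]].
  remember (Cmul (Cadd C1 (Copp (Cexpi theta))) a) as b eqn:Hbdef.
  assert (Hb : 0 < Cnorm2 b)
    by (rewrite Hbdef; apply Cnorm2_pos, Cmul_neq0; [apply one_sub_Cexpi_neq0|]; assumption).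
  pose proof (cos_sin_sq theta) as Hcs.
  destruct (Req_dec (sin theta) 0) as [Hs | Hs].
  - (* e^{i theta} = -1 makes b and e^{i theta} b collinear; use b and i b instead. *)
    assert (Hc : cos theta = -1) by (rewrite Hs in Hcs; nra).
    apply (G_hf_orbits_no_accumulation theta a N b (- snd b, fst b)); try assumption.
    + exists (-1)%Z, 0%Z. unfold Cexpi; rewrite Hc, Hs. Cring.
    + exists 0%Z, (-1)%Z. unfold Cexpi; rewrite Hc, Hs. Cring.
    + rewrite <- Hbdef. exists 1%Z, 0%Z. Cring.
    + unfold Cdet, Cnorm2 in *; cbn [fst snd]. lra.
  - apply (G_hf_orbits_no_accumulation theta a N b (Cmul (Cexpi theta) b)); try assumption.
    + exists 0%Z, 1%Z. Cring.
    + exists (-1)%Z, n. rewrite Cexpi_sq_mul, <- Hn. Cring.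
    + rewrite <- Hbdef. exists 1%Z, 0%Z. Cring.
    + replace (Cdet b (Cmul (Cexpi theta) b)) with (sin theta * Cnorm2 b)
        by (unfold Cdet, Cnorm2, Cexpi, Cmul; cbn [fst snd]; ring).
      apply Rmult_integral_contrapositive; lra.
Qed.

Lemma dense_not_discrete A : Cdense A -> ~ Cdiscrete A.
Proof.
  intros Hdense Hdisc.
  destruct (Hdense C0 1 Rlt_0_1) as [u [Au _]].
  destruct (Hdisc u Au) as [e [He Hiso]].
  destruct (Hdense (Cadd u (e / 2, 0)) (e / 2) ltac:(lra)) as [u' [Au' Hd]].
  apply Cnorm_lt_iff in Hd; [|lra].
  assert (Hu' : u' = u).
  { apply Hiso; [exact Au'|]. apply Cnorm_lt_iff; [exact He|].
    unfold Cnorm2, Cadd, Copp in *; cbn [fst snd] in *.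
    set (d1 := fst u' + - (fst u + e / 2)) in Hd.
    set (d2 := snd u' + - (snd u + 0)) in Hd.
    assert (Hd1 : d1 * d1 < e / 2 * (e / 2)) by nra.
    assert (Hd1' : d1 < e / 2) by nra.
    replace (fst u' + - fst u) with (d1 + e / 2) by (unfold d1; ring).
    replace (snd u' + - snd u) with d2 by (unfold d2; ring).
    nra. }
  subst u'. unfold Cnorm2, Cadd, Copp in Hd; cbn [fst snd] in Hd. nra.
Qed.

Lemma SR1_rot_f_iff theta a : (forall k : Z, theta <> 2 * PI * IZR k) ->
  (H2 theta \/ H3 theta <-> SR1 (rot_f a theta)).
Proof.
  intro Htheta. unfold SR1, F2, F3, rot_f; cbn [fst]. split.
  - intros [H | H]; [left | right]; exists theta; auto.
  - intros [[x [Hx E]] | [x [Hx E]]];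
      [destruct (two_cos_int_of_H2_H3 x (or_introl Hx)) as [n Hn]
      | destruct (two_cos_int_of_H2_H3 x (or_intror Hx)) as [n Hn]];
      apply (H2_H3_of_two_cos_int theta Htheta n);
      apply (f_equal fst) in E; unfold Cexpi in E; cbn [fst] in E; congruence.
Qed.

Lemma exclusive_dichotomy (Q D C : Prop) :
  (Q -> C) -> (~ Q -> D) -> (D -> C -> False) ->
  ((D /\ ~ C) \/ (C /\ ~ D)) /\ (D <-> ~ Q) /\ (C <-> Q).
Proof. intros HC HD Hex. destruct (classic Q); tauto. Qed.

Theorem theorem3p1 (theta : R) (a : Cplx)
  (htheta : forall k : Z, theta <> 2 * PI * IZR k)
  (ha : a <> C0) :
  let G := G_hf a theta in
  let all_dense := forall z, Cdense (Corbit G z) in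
  let all_cd := forall z, Cclosed (Corbit G z) /\ Cdiscrete (Corbit G z) in
  ((all_dense /\ ~ all_cd) \/ (all_cd /\ ~ all_dense)) /\
  (all_dense <-> ~ (H2 theta \/ H3 theta)) /\
  (all_cd <-> (H2 theta \/ H3 theta)) /\
  ((H2 theta \/ H3 theta) <-> SR1 (rot_f a theta)).
Proof.
  cbv zeta.
  assert (Hcd : H2 theta \/ H3 theta -> forall z,
            Cclosed (Corbit (G_hf a theta) z) /\ Cdiscrete (Corbit (G_hf a theta) z)).
  { intro HQ. destruct (two_cos_int_of_H2_H3 theta HQ) as [n Hn].
    exact (G_hf_orbits_closed_discrete theta a n htheta ha Hn). }
  assert (Hdense : ~ (H2 theta \/ H3 theta) -> forall z, Cdense (Corbit (G_hf a theta) z)).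
  { intro HQ. apply G_hf_orbits_dense; [|exact ha].
    intros n Hn. exact (HQ (H2_H3_of_two_cos_int theta htheta n Hn)). }
  assert (Hexcl : (forall z, Cdense (Corbit (G_hf a theta) z)) ->
            (forall z, Cclosed (Corbit (G_hf a theta) z) /\ Cdiscrete (Corbit (G_hf a theta) z)) ->
            False).
  { intros D CD. exact (dense_not_discrete _ (D C0) (proj2 (CD C0))). }
  destruct (exclusive_dichotomy _ _ _ Hcd Hdense Hexcl) as [Hdich [HD HC]].
  exact (conj Hdich (conj HD (conj HC (SR1_rot_f_iff theta a htheta)))).
Qed.
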